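(* Let $\Gamma : \mathcal{U}$ and $(A, \alpha) : \mathrm{Fib}\,\Gamma$ be a fibration which is contractible, i.e. $\mathrm{Contr}\,A$ is inhabited. Then the family $C_A : \Gamma \times \mathbb{I} \to \mathcal{U}$, $C_A(x,i) \triangleq [i = 0] \to A(x)$, admits a composition structure $c_\alpha : \mathrm{isFib}(C_A)$.
   Context: We work in the internal extensional type theory of the topos of cubical sets (presheaves on the category whose objects are finite sets of symbols and whose maps $I \to J$ are functions $J \to dm(I)$, with $dm(I)$ the free De Morgan algebra on $I$). There is an interval object $\mathbb{I}$ with endpoints $0, 1$; for $e \in \{0,1\}$ write $\bar e$ for the other endpoint. There is a subobject $\mathrm{Cof} \subseteq \Omega$ of cofibrant propositions closed under $\vee$, $\wedge$ and $\mathbb{I}$-indexed $\forall$, containing $i = 0$ for $i : \mathbb{I}$, and an internal universe $\mathcal{U}$ (an internal full subtopos). For $\varphi : \Omega$, $[\varphi] \triangleq \{\_ : 1 \mid \varphi\}$. For $\varphi : \mathrm{Cof}$, $f : [\varphi] \to A$, $a : A$, $(\varphi, f) \nearrow a$ means $\forall (u : [\varphi]).\ f\,u = a$. For $e \in \{0,1\}$ and $A : \mathbb{I} \to \mathcal{U}$, $\mathrm{Comp}\,e\,A$ consists of functions taking $\varphi : \mathrm{Cof}$, $f : [\varphi] \to \prod_{i:\mathbb{I}} A\,i$, and $a_0 : A\,e$ with $(\varphi, \lambda u.\,f\,u\,e) \nearrow a_0$, and returning $a_1 : A\,\bar e$ with $(\varphi, \lambda u.\,f\,u\,\bar e) \nearrow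 a_1$. For $A : \Gamma \to \mathcal{U}$, $\mathrm{isFib}\,A \triangleq (e : \{0,1\})(p : \mathbb{I} \to \Gamma) \to \mathrm{Comp}\,e\,(A \circ p)$, and $\mathrm{Fib}\,\Gamma \triangleq (A : \Gamma \to \mathcal{U}) \times \mathrm{isFib}\,A$. For a type $X$ and $a, b : X$, $a \rightsquigarrow b$ is the type of paths $p : \mathbb{I} \to X$ with $p\,0 = a$, $p\,1 = b$. For $X : \mathcal{U}$, $\mathrm{Contr}\,X \triangleq (a_0 : X) \times ((a : X) \to a_0 \rightsquigarrow a)$, and for a family $A : \Gamma \to \mathcal{U}$, $\mathrm{Contr}\,A \triangleq (x : \Gamma) \to \mathrm{Contr}(A\,x)$. *)

From Stdlib Require Import FunctionalExtensionality PropExtensionality.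

Set Implicit Arguments.

(* endpoint e : {0,1} encoded as bool: false = 0, true = 1 *)
Definition endpt {I : Type} (i0 i1 : I) (e : bool) : I :=
  if e then i1 else i0.

(* (phi, f) ↗ a : forall u : [phi], f u = a ; [phi] is rendered as the proposition phi *)
Definition extends {A : Type} (phi : Prop) (f : phi -> A) (a : A) : Prop :=
  forall u : phi, f u = a.

Definition Comp {I : Type} (i0 i1 : I) (Cof : Prop -> Prop) (e : bool)
  (A : I -> Type) : Type :=
  forall (phi : Prop), Cof phi ->
  forall (f : phi -> forall i : I, A i) (a0 : A (endpt i0 i1 e)),
    extends (fun u => f u (endpt i0 i1 e)) a0 ->
    { a1 : A (endpt i0 i1 (negb e)) |
        extends (fun u => f u (endpt i0 i1 (negb e))) a1 }.

Definition isFib {I : Type} (i0 i1 : I) (Cof : Prop -> Prop) {Gamma : Type}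
  (A : Gamma -> Type) : Type :=
  forall (e : bool) (p : I -> Gamma), Comp i0 i1 Cof e (fun i => A (p i)).

Definition Fib {I : Type} (i0 i1 : I) (Cof : Prop -> Prop) (Gamma : Type) : Type :=
  { A : Gamma -> Type & isFib i0 i1 Cof A }.

Definition PathT {I : Type} (i0 i1 : I) {X : Type} (a b : X) : Type :=
  { p : I -> X | p i0 = a /\ p i1 = b }.

Definition Contr {I : Type} (i0 i1 : I) (X : Type) : Type :=
  { a0 : X & forall a : X, PathT i0 i1 a0 a }.

Definition ContrFam {I : Type} (i0 i1 : I) {Gamma : Type} (A : Gamma -> Type) : Type :=
  forall x : Gamma, Contr i0 i1 (A x).

Definition CA {I : Type} (i0 : I) {Gamma : Type} (A : Gamma -> Type)
  (xi : Gamma * I) : Type :=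
  (snd xi = i0) -> A (fst xi).

(* A fibrant contractible type has fillers for every partial element: compose
   from the centre of contraction along the contracting paths of the partial
   element, in the constant line.  A family all of whose fibres have such
   fillers is fibrant, since a composition problem is solved by filling its
   partial element at the target endpoint alone.  Fillers pass to function
   types pointwise, and every fibre of [C_A] is the function type [[i = 0] -> A x]. *)
From Stdlib Require Import FunctionalExtensionality.

Definition hasFillers (Cof : Prop -> Prop) (X : Type) : Type :=
  forall phi : Prop, Cof phi -> forall g : phi -> X, { a : X | extends g a }.

Lemma Contr_hasFillers {I : Type} {i0 i1 : I} {Cof : Prop -> Prop} {X : Type} :
  Comp i0 i1 Cof false (fun _ => X) -> Contr i0 i1 X -> hasFillers Cof X.
Proof.
  intros comp [c contr] phi cphi g.
  assert (path_from_c : forall v : phi, proj1_sig (contr (g v)) i0 = c)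
    by (intro v; exact (proj1 (proj2_sig (contr (g v))))).
  destruct (comp phi cphi (fun v => proj1_sig (contr (g v))) c path_from_c)
    as [a Ha].
  exists a; intro v.
  rewrite <- (Ha v); simpl.
  symmetry; exact (proj2 (proj2_sig (contr (g v)))).
Qed.

Lemma hasFillers_fun (Cof : Prop -> Prop) (P X : Type) :
  hasFillers Cof X -> hasFillers Cof (P -> X).
Proof.
  intros fill phi cphi g.
  exists (fun u => proj1_sig (fill phi cphi (fun v => g v u))).
  intro v; apply functional_extensionality; intro u.
  exact (proj2_sig (fill phi cphi (fun v => g v u)) v).
Qed.

Lemma hasFillers_isFib {I : Type} (i0 i1 : I) (Cof : Prop -> Prop)
    {Gamma : Type} (B : Gamma -> Type) :
  (forall x, hasFillers Cof (B x)) -> isFib i0 i1 Cof B.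
Proof.
  intros fill e p phi cphi f _ _.
  exact (fill _ phi cphi (fun v => f v (endpt i0 i1 (negb e)))).
Qed.

Theorem mainTheorem12
  (I : Type) (i0 i1 : I) (Cof : Prop -> Prop)
  (Cof_or : forall p q : Prop, Cof p -> Cof q -> Cof (p \/ q))
  (Cof_and : forall p q : Prop, Cof p -> Cof q -> Cof (p /\ q))
  (Cof_forall : forall P : I -> Prop, (forall i, Cof (P i)) -> Cof (forall i, P i))
  (Cof_eq0 : forall i : I, Cof (i = i0))
  (Gamma : Type) (AF : Fib i0 i1 Cof Gamma)
  (hcontr : ContrFam i0 i1 (projT1 AF)) :
  isFib i0 i1 Cof (CA i0 (projT1 AF)).
Proof.
  destruct AF as [A alpha]; simpl in *.
  apply hasFillers_isFib; intros [x i].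
  apply hasFillers_fun.
  exact (Contr_hasFillers (alpha false (fun _ => x)) (hcontr x)).
Qed.
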